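(* For every prime $p$, there are infinitely many positive integers $L$ such that there exists a multicast network that is vector linearly solvable over $\mathrm{GF}(p)^L$ but not scalar linearly solvable over $\mathrm{GF}(q')$ for any prime power $q'\le p^L$.
   Context: A multicast network is a finite directed acyclic multigraph with a unique source $s$ and a set of receivers; edges have unit capacity; $In(v)$, $Out(v)$ are incoming/outgoing edges of $v$; $\omega=|Out(s)|$ is the source dimension and every receiver has $\omega$ edge-disjoint paths from $s$. A vector linear code over $\mathrm{GF}(q)^L$ (dimension $L$ over $\mathrm{GF}(q)$) assigns to each pair $(d,e)$ of edges an $L\times L$ matrix $\mathbf{K}_{d,e}$ over $\mathrm{GF}(q)$, zero unless $d\in In(v)$, $e\in Out(v)$ for some $v$; global encoding kernels ($\omega L\times L$) satisfy $[\mathbf{F}_e]_{e\in Out(s)}=\mathbf{I}_{\omega L}$ and $\mathbf{F}_e=\sum_{d\in In(v)}\mathbf{F}_d\mathbf{K}_{d,e}$ for $e\in Out(v)$, $v\neq s$; it is a solution if $[\mathbf{F}_e]_{e\in In(t)}$ has rank $\omega L$ for every receiver $t$. A scalar linear solution over $\mathrm{GF}(Q)$ is a vector linear solution of dimension $1$ over $\mathrm{GF}(Q)$. *)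

From HB Require Import structures.
From mathcomp Require Import all_boot all_order all_algebra all_field.
Set Implicit Arguments. Unset Strict Implicit. Unset Printing Implicit Defensive.
Import GRing.Theory.
Local Open Scope ring_scope.

(* A multicast network: a finite directed multigraph with vertex type V and
   edge type E; edge e goes from [tl e] to [hd e]; source [s]; receivers [T]. *)
Section Network.
Variables (V E : finType) (tl hd : E -> V) (s : V) (T : {set V}).

Definition Out (v : V) : {set E} := [set e | tl e == v].
Definition In (v : V) : {set E} := [set e | hd e == v].

Definition omega : nat := #|Out s|.

Fixpoint is_path (x : V) (p : seq E) (y : V) : bool :=
  match p with
  | [::] => x == y
  | e :: p' => (tl e == x) && is_path (hd e) p' y
  end.

Definition acyclic : Prop := exists r : V -> nat, forall e, (r (tl e) < r (hd e))%N.

Definition multicast_network : Prop :=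
  [/\ acyclic,
      In s = set0 &
      forall t, t \in T ->
        exists P : 'I_omega -> seq E,
          (forall i, is_path s (P i) t) /\
          (forall i j, i != j -> forall e, e \in P i -> e \notin P j)].

(* The i-th block column (of width L) of the identity matrix I_{omega L}. *)
Definition unit_block (F : fieldType) (L : nat) (i : 'I_omega) : 'M[F]_(omega * L, L) :=
  \matrix_(r < omega * L, c < L) ((nat_of_ord r == i * L + c)%N)%:R.

(* The concatenation [F_e]_{e in In(t)}, written with zero columns for edges
   not in In(t) (which does not change the rank). Columns are indexed by the
   pairs (e, c) of E * 'I_L. *)
Definition in_kernels (F : fieldType) (L : nat) (G : E -> 'M[F]_(omega * L, L)) (t : V)
  : 'M[F]_(omega * L, #|{: E * 'I_L}|) :=
  \matrix_(r < omega * L, j < #|{: E * 'I_L}|)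
     (let ec := enum_val j in if hd ec.1 == t then G ec.1 r ec.2 else 0).

Definition vlin_solution (F : fieldType) (L : nat) (K : E -> E -> 'M[F]_L) : Prop :=
  (forall d e, hd d != tl e -> K d e = 0) /\
  exists (G : E -> 'M[F]_(omega * L, L)) (ord : E -> 'I_omega),
    [/\ {in Out s &, injective ord},
        (forall e, e \in Out s -> G e = unit_block F L (ord e)),
        (forall e, tl e != s -> G e = \sum_(d in In (tl e)) G d *m K d e) &
        (forall t, t \in T -> \rank (in_kernels G t) = (omega * L)%N)].

Definition vlin_solvable (F : fieldType) (L : nat) : Prop :=
  exists K : E -> E -> 'M[F]_L, vlin_solution K.

Definition slin_solvable (F : fieldType) : Prop := vlin_solvable F 1.

End Network.

From HB Require Import structures.
From mathcomp Require Import all_boot all_order all_algebra all_field.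
From mathcomp Require Import zify.
Set Implicit Arguments. Unset Strict Implicit. Unset Printing Implicit Defensive.
Import GRing.Theory.
Local Open Scope ring_scope.

(* A source with five edges feeds a hub; the hub sends two edges to each of r
   middle nodes, and the receiver t_xy (x <> y) gets two edges from middle node x,
   two from middle node y and two from the hub.  A scalar solution over K gives
   each middle node a pair of vectors of K^5; if |K|^10 < r, two middle nodes
   x <> y carry the same pair and t_xy sees a space of dimension at most 4 < 5.
   Over GF(p)^L, middle node i sends the rows of [I | A_i], where the A_i are
   2L x 3L matrices at pairwise rank distance >= L: then t_xy sees rank >= 3L
   from x and y, and the hub, which knows the whole message, supplies the missing
   2L.  A greedy (Gilbert-Varshamov) count yields p^(10L) + 1 such matrices once
   L >= 6, so no field of order <= p^L gives a scalar solution. *)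

Lemma low_rank_factor (F : fieldType) m n k (D : 'M[F]_(m, n)) :
  (\rank D <= k)%N -> exists (P : 'M[F]_(m, k)) (Q : 'M[F]_(k, n)), D = P *m Q.
Proof.
move=> rankD; exists (col_ebase D *m pid_mx (\rank D)), (pid_mx (\rank D) *m row_ebase D).
by rewrite -[LHS]mulmx_ebase !mulmxA -[_ *m pid_mx _ *m pid_mx _]mulmxA pid_mx_id.
Qed.

Lemma complete_row_full (F : fieldType) a b n (X : 'M[F]_(a, n)) :
  (n <= \rank X + b)%N -> exists Y : 'M[F]_(b, n), row_full (col_mx X Y).
Proof.
move=> rankX; have rankC : (\rank (X^C)%MS <= b)%N.
  by rewrite mxrank_compl leq_subLR.
have [P [Y defC]] := low_rank_factor rankC.
exists Y; rewrite -sub1mx -addsmxE.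
apply: submx_trans (addsmxS (submx_refl X) (submxMl P Y)).
by rewrite -defC sub1mx addsmx_compl_full.
Qed.

Lemma mxrank_row1_pair (F : fieldType) k m (A B : 'M[F]_(k, m)) :
  (k + \rank (B - A)%R <= \rank (col_mx (row_mx 1%:M A) (row_mx 1%:M B)))%N.
Proof.
set Z := col_mx _ _.
have elim_rows : block_mx 1%:M 0 (- 1%:M) 1%:M *m Z = block_mx 1%:M A 0 (B - A).
  rewrite /Z mul_block_col !mul1mx !mul0mx addr0 block_mxEv; congr col_mx.
  by rewrite mulNmx mul1mx opp_row_mx add_row_mx addNr addrC.
have elim_cols : block_mx 1%:M A 0 (B - A) *m block_mx 1%:M (- A) 0 1%:M
                 = block_mx 1%:M 0 0 (B - A).
  by rewrite mulmx_block !mulmx1 !mul1mx !mulmx0 !mul0mx !addr0 add0r addNr.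
have := mxrankM_maxl (block_mx 1%:M A 0 (B - A)) (block_mx 1%:M (- A) 0 1%:M).
rewrite elim_cols rank_diag_block_mx mxrank1 -elim_rows => /leq_trans; apply.
exact: mxrankM_maxr.
Qed.

Section RankMetricCode.
Variables (F : finFieldType) (m n k : nat).

Lemma exists_rank_far N (c : 'I_N -> 'M[F]_(m, n)) :
  (N * #|F| ^ (k.-1 * (m + n)) < #|F| ^ (m * n))%N ->
  exists A : 'M[F]_(m, n), forall i, (k <= \rank (A - c i)%R)%N.
Proof.
move=> small_N.
have [/existsP[A /forallP]|/existsPn near_all] :=
  boolP [exists A : 'M[F]_(m, n), [forall i, (k <= \rank (A - c i)%R)%N]]; first by exists A.
exfalso.
pose g (x : 'I_N * ('M[F]_(m, k.-1) * 'M[F]_(k.-1, n))) := c x.1 + x.2.1 *m x.2.2.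
have covered : [set: 'M[F]_(m, n)] \subset codom g.
  apply/subsetP => A _; have /forallPn[i] := near_all A; rewrite -ltnNge => near_i.
  have [|P [Q defA]] := @low_rank_factor _ _ _ k.-1 (A - c i).
    by rewrite -ltnS (leq_trans near_i) ?leqSpred.
  by apply/codomP; exists (i, (P, Q)); rewrite /g /= -defA addrC subrK.
have := leq_trans (subset_leq_card covered) (card_size _).
rewrite cardsT card_mx size_codom !card_prod !card_mx card_ord -expnD.
by rewrite (mulnC m k.-1) -mulnDr leqNgt small_N.
Qed.

Lemma rank_metric_code N :
  (N.-1 * #|F| ^ (k.-1 * (m + n)) < #|F| ^ (m * n))%N ->
  exists c : 'I_N -> 'M[F]_(m, n), forall i j, i != j -> (k <= \rank (c i - c j)%R)%N.
Proof.
elim: N => [|N IH] small_N; first by exists (fun=> 0) => -[].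
have [|c c_code] := IH.
  by apply: leq_ltn_trans small_N; rewrite leq_mul2r leq_pred orbT.
have [A A_far] := exists_rank_far c small_N.
exists (fun i => if unlift ord_max i is Some j then c j else A) => i j.
case: unliftP => [i' ->|->]; case: unliftP => [j' ->|->] //; last by rewrite eqxx.
- by move=> neq_ij; apply: c_code; apply: contraNneq neq_ij => ->.
- by move=> _; rewrite -mxrank_opp opprB.
Qed.

End RankMetricCode.

Lemma eqn_divmod L i c r : (c < L)%N ->
  (r == i * L + c)%N = (r %/ L == i)%N && (r %% L == c)%N.
Proof.
move=> lt_cL; apply/eqP/andP => [->|[/eqP <- /eqP <-]]; last exact: divn_eq.
by rewrite divnMDl ?modnMDl ?divn_small ?modn_small ?addn0 //; case: L lt_cL.
Qed.

Section NetworkKernels.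
Variables (V E : finType) (tl hd : E -> V) (s : V) (F : fieldType) (L : nat).
Local Notation omega := (omega tl s).

Lemma sum_unit_block_mul_tr :
  \sum_(i < omega) unit_block F L i *m (unit_block F L i)^T = 1%:M.
Proof.
apply/matrixP => r r'; rewrite summxE !mxE.
have L_gt0 : (0 < L)%N by case: L r => [|//] r; rewrite muln0 in r; case: r.
have lt_i0 : (r %/ L < omega)%N by rewrite ltn_divLR.
have lt_c0 : (r %% L < L)%N by rewrite ltn_mod.
rewrite (bigD1 (Ordinal lt_i0)) //= big1 ?addr0 => [|i ne_i]; rewrite mxE.
  rewrite (bigD1 (Ordinal lt_c0)) //= big1 ?addr0 => [|c ne_c]; rewrite !mxE.
    by rewrite -divn_eq eqxx mul1r eq_sym.
  rewrite eqn_divmod //= eqxx /=.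
  by case: eqP => [r_c|]; rewrite ?mul0r //; case/eqP: ne_c; apply: val_inj.
apply: big1 => c _; rewrite !mxE eqn_divmod //.
by case: eqP => [r_i|]; rewrite ?mul0r //; case/eqP: ne_i; apply: val_inj.
Qed.

Lemma tr_kernel_sub_in_kernels (G : E -> 'M[F]_(omega * L, L)) e t :
  hd e = t -> ((G e)^T <= (in_kernels hd G t)^T)%MS.
Proof.
move=> <-; apply/row_subP => c.
suff -> : row c (G e)^T = row (enum_rank (e, c)) (in_kernels hd G (hd e))^T by exact: row_sub.
by apply/rowP => r; rewrite !mxE enum_rankK /= eqxx.
Qed.

Lemma tr_in_kernels_sub (G : E -> 'M[F]_(omega * L, L)) t k (Z : 'M_(k, omega * L)) :
  (forall e, hd e = t -> ((G e)^T <= Z)%MS) -> ((in_kernels hd G t)^T <= Z)%MS.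
Proof.
move=> sub_Z; apply/row_subP => j.
have [into_t|not_into_t] := eqVneq (hd (enum_val j).1) t; last first.
  rewrite (_ : row j _ = 0) ?sub0mx //.
  by apply/rowP => r; rewrite !mxE /= (negbTE not_into_t).
apply: submx_trans (sub_Z _ into_t).
rewrite (_ : row j _ = row (enum_val j).2 (G (enum_val j).1)^T) ?row_sub //.
by apply/rowP => r; rewrite !mxE /= into_t eqxx.
Qed.

Lemma tr_kernel_sub_of_In (G : E -> 'M[F]_(omega * L, L)) (K : E -> E -> 'M[F]_L)
    k (Z : 'M_(k, omega * L)) e :
  G e = \sum_(d in In hd (tl e)) G d *m K d e ->
  (forall d, d \in In hd (tl e) -> ((G d)^T <= Z)%MS) -> ((G e)^T <= Z)%MS.
Proof.
move=> -> sub_Z; rewrite raddf_sum /=; apply: summx_sub => d d_in.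
by rewrite trmx_mul; apply: submx_trans (submxMl _ _) (sub_Z d d_in).
Qed.

End NetworkKernels.

Definition bundle (F : fieldType) (I : Type) n L (G : I -> 'M[F]_(n, L)) (e : bool -> I)
  : 'M[F]_(L + L, n) := col_mx (G (e false))^T (G (e true))^T.

Lemma tr_sub_bundle (F : fieldType) (I : Type) n L (G : I -> 'M[F]_(n, L)) e a :
  ((G (e a))^T <= bundle G e)%MS.
Proof. by rewrite /bundle -addsmxE; case: a; rewrite ?addsmxSl ?addsmxSr. Qed.

Section Network.
Variable r : nat.

Definition NV : finType := option (option ('I_r + 'I_r * 'I_r)).
Definition NE : finType :=
  ('I_5 + ('I_r * bool + ('I_r * 'I_r * bool * bool + 'I_r * 'I_r * bool)))%type.

Definition src : NV := None.
Definition hub : NV := Some None.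
Definition mid i : NV := Some (Some (inl i)).
Definition rcv x y : NV := Some (Some (inr (x, y))).

Definition src_hub k : NE := inl k.
Definition hub_mid i a : NE := inr (inl (i, a)).
Definition mid_rcv x y a b : NE := inr (inr (inl (x, y, a, b))).
Definition hub_rcv x y a : NE := inr (inr (inr (x, y, a))).

Definition net_tl (e : NE) : NV :=
  match e with
  | inl _ => src
  | inr (inl _) | inr (inr (inr _)) => hub
  | inr (inr (inl (x, y, _, b))) => mid (if b then y else x)
  end.

Definition net_hd (e : NE) : NV :=
  match e with
  | inl _ => hub
  | inr (inl (i, _)) => mid i
  | inr (inr (inl (x, y, _, _))) | inr (inr (inr (x, y, _))) => rcv x y
  end.

Definition receivers : {set NV} :=
  [set v | if v is Some (Some (inr (x, y))) then x != y else false].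

Lemma Out_src : Out net_tl src = [set src_hub k | k : 'I_5].
Proof.
apply/setP => e; rewrite inE.
case: e => [k|e]; apply/esym/imsetP; first by exists k.
by case: e => [[? ?]|[[[[? ?] ?] ?]|[[? ?] ?]]] [?].
Qed.

Lemma omega_net : omega net_tl src = 5%N.
Proof. by rewrite /omega Out_src card_imset ?card_ord // => k1 k2 []. Qed.

Lemma In_hub : In net_hd hub = Out net_tl src.
Proof. by apply/setP => -[k|[[? ?]|[[[[? ?] ?] ?]|[[? ?] ?]]]]; rewrite !inE. Qed.

Lemma In_mid z d : d \in In net_hd (mid z) -> exists a, d = hub_mid z a.
Proof.
by rewrite inE; case: d => [k|[[? a]|[[[[? ?] ?] ?]|[[? ?] ?]]]] //= /eqP[->]; exists a.
Qed.

Lemma In_rcv x y d : d \in In net_hd (rcv x y) ->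
  (exists a b, d = mid_rcv x y a b) \/ (exists a, d = hub_rcv x y a).
Proof.
rewrite inE; case: d => [k|[[? ?]|[[[[? ?] a] b]|[[? ?] a]]]] //= /eqP[-> ->].
  by left; exists a, b.
by right; exists a.
Qed.

Definition rcv_path x y (k : nat) : seq NE :=
  match k with
  | 0 => [:: src_hub (inord 0); hub_mid x false; mid_rcv x y false false]
  | 1 => [:: src_hub (inord 1); hub_mid x true; mid_rcv x y true false]
  | 2 => [:: src_hub (inord 2); hub_mid y false; mid_rcv x y false true]
  | 3 => [:: src_hub (inord 3); hub_mid y true; mid_rcv x y true true]
  | _ => [:: src_hub (inord 4); hub_rcv x y false]
  end.

(* Every edge of the k-th path to t_xy has tag k, so these paths are edge-disjoint. *)
Definition path_tag x (e : NE) : nat :=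
  match e with
  | inl k => k
  | inr (inl (z, a)) => a + 2 * (z != x)
  | inr (inr (inl (_, _, a, b))) => a + 2 * b
  | inr (inr (inr _)) => 4
  end.

Lemma rcv_path_tag x y k e : x != y -> (k < 5)%N -> e \in rcv_path x y k -> path_tag x e = k.
Proof.
move=> neq_xy; rewrite eq_sym in neq_xy.
case: k => [|[|[|[|[|//]]]]] _; rewrite !inE; repeat case/orP.
all: by move/eqP->; rewrite /= ?inordK ?eqxx ?neq_xy.
Qed.

Lemma net_multicast : multicast_network net_tl net_hd src receivers.
Proof.
split.
- exists (fun v : NV => match v with
                       | None => 0 | Some None => 1 | Some (Some (inl _)) => 2 | _ => 3 end).
  by case=> [k|[[i a]|[[[[x y] a] b]|[[x y] a]]]] //=; case: b.
- by apply/setP => -[k|[[? ?]|[[[[? ?] ?] ?]|[[? ?] ?]]]]; rewrite !inE.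
move=> t; rewrite inE; case: t => [[[//|[x y]]|//]|//] neq_xy.
have lt5 (k : 'I_(omega net_tl src)) : (k < 5)%N by rewrite -omega_net.
exists (fun k => rcv_path x y k); split.
  by move=> k; have := lt5 k; case: k => [[|[|[|[|[|//]]]]] _] _ /=; rewrite ?eqxx.
move=> i j neq_ij e e_i; apply/negP => e_j; case/eqP: neq_ij; apply: val_inj.
by rewrite /= -(rcv_path_tag neq_xy (lt5 i) e_i) (rcv_path_tag neq_xy (lt5 j) e_j).
Qed.

Lemma net_not_slin_solvable (K : finFieldType) :
  (#|K| ^ 10 < r)%N -> ~ slin_solvable net_tl net_hd src receivers K.
Proof.
move=> big_r [K_loc [_ [G [_ [_ _ G_rec G_rank]]]]].
have [/injectiveP bundle_inj|/injectivePn[i [j neq_ij same_ij]]] :=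
  boolP (injectiveb (fun z => bundle G (hub_mid z))).
  by have := leq_card _ bundle_inj; rewrite card_mx card_ord omega_net leqNgt big_r.
pose Z := (bundle G (hub_mid i) + bundle G (hub_rcv i j))%MS.
have mid_sub z a : z \in [:: i; j] -> ((G (hub_mid z a))^T <= Z)%MS.
  move=> z_ij; apply: submx_trans (tr_sub_bundle G (hub_mid z) a) _.
  by move: z_ij; rewrite !inE => /orP[]/eqP->; rewrite -?same_ij addsmxSl.
have sub_Z : ((in_kernels net_hd G (rcv i j))^T <= Z)%MS.
  apply: tr_in_kernels_sub => e into; have : e \in In net_hd (rcv i j) by rewrite inE into.
  case/In_rcv => [[a [b ->]]|[a ->]]; last first.
    exact: submx_trans (tr_sub_bundle _ _ a) (addsmxSr _ _).
  apply: (tr_kernel_sub_of_In (G_rec _ _)) => // d /In_mid[a' ->].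
  by apply: mid_sub; case: b; rewrite !inE eqxx ?orbT.
have rank_Z : (\rank Z <= 4)%N by rewrite /Z addsmxE rank_leq_row.
have := leq_trans (mxrankS sub_Z) rank_Z.
by rewrite mxrank_tr G_rank ?omega_net // inE.
Qed.

Section VectorSolution.
Variables (F : finFieldType) (L : nat) (A : 'I_r -> 'M[F]_(L + L, 3 * L)).
Hypothesis A_code : forall i j, i != j -> (L <= \rank (A i - A j)%R)%N.
Local Notation w := (omega net_tl src).

Lemma systematic_width : (L + L + 3 * L = w * L)%N.
Proof. rewrite omega_net; lia. Qed.

Definition systematic_mx i : 'M[F]_(L + L, w * L) :=
  castmx (erefl, systematic_width) (row_mx 1%:M (A i)).

Lemma mxrank_systematic_pair i j : i != j ->
  (w * L <= \rank (col_mx (systematic_mx i) (systematic_mx j)) + (L + L))%N.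
Proof.
move=> neq_ij; have far : (L <= \rank (A j - A i)%R)%N by rewrite A_code // eq_sym.
have := leq_trans (leq_add (leqnn (L + L)) far) (mxrank_row1_pair (A i) (A j)).
rewrite /systematic_mx; case: _ / systematic_width; rewrite !castmx_id => rank_pair.
rewrite [X in (X <= _)%N]addnC leq_add2r; apply: leq_trans rank_pair; lia.
Qed.

Definition completion x y : 'M[F]_(L + L, w * L) :=
  odflt 0 [pick Y | row_full (col_mx (col_mx (systematic_mx x) (systematic_mx y)) Y)].

Lemma completion_full x y : x != y ->
  row_full (col_mx (col_mx (systematic_mx x) (systematic_mx y)) (completion x y)).
Proof.
move=> neq_xy; rewrite /completion; case: pickP => [//|no_Y].
have [Y full_Y] := complete_row_full (mxrank_systematic_pair neq_xy).
by move: (no_Y Y); rewrite full_Y.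
Qed.

Definition bundle_kernel (M : 'M[F]_(L + L, w * L)) (a : bool) : 'M[F]_(w * L, L) :=
  (if a then dsubmx M else usubmx M)^T.

Lemma bundle_kernelK (M : 'M[F]_(L + L, w * L)) : bundle (bundle_kernel M) id = M.
Proof. by rewrite /bundle /bundle_kernel !trmxK vsubmxK. Qed.

Lemma src_hub0_in : src_hub ord0 \in Out net_tl src.
Proof. by rewrite inE. Qed.

Definition src_rank (e : NE) : 'I_w := enum_rank_in src_hub0_in e.

Definition global_kernel (e : NE) : 'M[F]_(w * L, L) :=
  match e with
  | inl _ => unit_block F L (src_rank e)
  | inr (inl (i, a)) => bundle_kernel (systematic_mx i) a
  | inr (inr (inl (x, y, a, b))) => bundle_kernel (systematic_mx (if b then y else x)) a
  | inr (inr (inr (x, y, a))) => bundle_kernel (completion x y) a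
  end.

(* The hub receives the whole message on the five source edges and re-encodes it. *)
Definition local_kernel (d e : NE) : 'M[F]_L :=
  match e with
  | inl _ => 0
  | inr (inr (inl (x, y, a, b))) => if d == hub_mid (if b then y else x) a then 1%:M else 0
  | _ => if d is inl _ then (unit_block F L (src_rank d))^T *m global_kernel e else 0
  end.

Lemma global_kernel_hub e : net_tl e = hub ->
  global_kernel e = \sum_(d in In net_hd hub) global_kernel d *m local_kernel d e.
Proof.
move=> from_hub.
have -> : \sum_(d in In net_hd hub) global_kernel d *m local_kernel d e
          = \sum_(i < w) unit_block F L i *m (unit_block F L i)^T *m global_kernel e.
  rewrite In_hub (big_enum_rank src_hub0_in); apply: eq_bigr => d; rewrite inE.
  case: d => [k _|[[? ?]|[[[[? ?] ?] ?]|[[? ?] ?]]] //].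
  by case: e from_hub => [?|[[? ?]|[[[[? ?] ?] ?]|[[? ?] ?]]]] //= _; rewrite mulmxA.
by rewrite -mulmx_suml sum_unit_block_mul_tr mul1mx.
Qed.

Lemma global_kernel_mid_rcv x y a b : let e := mid_rcv x y a b in
  global_kernel e = \sum_(d in In net_hd (net_tl e)) global_kernel d *m local_kernel d e.
Proof.
move=> e; rewrite /e (bigD1 (hub_mid (if b then y else x) a)) ?inE //=.
rewrite eqxx mulmx1 big1 ?addr0 //.
by move=> d /andP[_ /negbTE ne_d]; rewrite /= ne_d mulmx0.
Qed.

Lemma net_vlin_solvable : vlin_solvable net_tl net_hd src receivers F L.
Proof.
exists local_kernel; split.
  move=> d [?|[[i a]|[[[[x y] a] b]|[[x y] a]]]] //=.
  - by case: d => //= k; rewrite eqxx.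
  - by have [->|//] := eqVneq d (hub_mid (if b then y else x) a); rewrite eqxx.
  - by case: d => //= k; rewrite eqxx.
exists global_kernel, src_rank; split.
- exact: enum_rank_in_inj.
- by case=> [k|[[? ?]|[[[[? ?] ?] ?]|[[? ?] ?]]]]; rewrite inE.
- case=> [k|[[i a]|[[[[x y] a] b]|[[x y] a]]]] //= _.
  + exact: (@global_kernel_hub (hub_mid i a)).
  + exact: global_kernel_mid_rcv.
  + exact: (@global_kernel_hub (hub_rcv x y a)).
move=> t; rewrite inE; case: t => [[[//|[x y]]|//]|//] neq_xy.
apply/eqP; rewrite -mxrank_tr -/(row_full _) -sub1mx.
have in_rcv (e : bool -> NE) : (forall a, net_hd (e a) = rcv x y) ->
    (bundle global_kernel e <= (in_kernels net_hd global_kernel (rcv x y))^T)%MS.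
  by move=> into; rewrite col_mx_sub !tr_kernel_sub_in_kernels.
have := completion_full neq_xy; rewrite -sub1mx => /submx_trans; apply; rewrite !col_mx_sub.
rewrite -[systematic_mx x]bundle_kernelK -[systematic_mx y]bundle_kernelK.
rewrite -[completion x y]bundle_kernelK (in_rcv (mid_rcv x y ^~ false)) //.
by rewrite (in_rcv (mid_rcv x y ^~ true)) ?(in_rcv (hub_rcv x y)).
Qed.

End VectorSolution.
End Network.

Lemma code_count_bound p L : (1 < p)%N -> (6 <= L)%N ->
  ((p ^ L) ^ 10 * p ^ (L.-1 * (L + L + 3 * L)) < p ^ ((L + L) * (3 * L)))%N.
Proof.
move=> p_gt1 L_ge6; rewrite -expnM -expnD ltn_exp2l //.
by case: L L_ge6 => //= L; nia.
Qed.

Local Close Scope ring_scope.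

Theorem corollary11 (p : nat) (p_prime : prime p) :
  forall n : nat, exists L : nat, (n < L)%N /\
    exists (V E : finType) (tl hd : E -> V) (s : V) (T : {set V}),
      [/\ multicast_network tl hd s T,
          vlin_solvable tl hd s T 'F_p L &
          forall F : finFieldType, (#|F| <= p ^ L)%N -> ~ slin_solvable tl hd s T F].
Proof.
move=> n; pose L := n + 6; pose r := ((p ^ L) ^ 10).+1.
exists L; split; first by rewrite /L; lia.
exists (NV r), (NE r), (@net_tl r), (@net_hd r), (@src r), (@receivers r); split.
- exact: net_multicast.
- have [|A A_code] := @rank_metric_code 'F_p (L + L) (3 * L) L r.
    by rewrite card_Fp // code_count_bound ?prime_gt1 // /L leq_addl.
  exact: net_vlin_solvable A_code.
- move=> K card_K; apply: net_not_slin_solvable.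
  by rewrite ltnS leq_exp2r.
Qed.
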